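(* Let $d\geqslant 2$ and $a=(a_1,\dots,a_d)\in\mathbb{Z}_p^d$ with $a_d\neq 0$. Let $L$ be the $\mathbb{Z}_p$-Lie lattice $\mathbb{Z}_p^{d+1}$ with canonical basis $(x_0,\dots,x_d)$ and bracket determined by $[x_i,x_j]=0$ for $1\leqslant i,j\leqslant d$, $[x_0,x_1]=\sum_{i=1}^d a_ix_i$, and $[x_0,x_{i+1}]=x_i$ for $1\leqslant i<d$. Then $L$ admits a finite-index subalgebra that is not self-similar of index $p$.
   Context: $p$ is any prime. A virtual endomorphism of a $\mathbb{Z}_p$-Lie lattice $M$ is a homomorphism of algebras $\varphi:N\to M$ with $N\subseteq M$ a finite-index subalgebra, of index $[M:N]$. An ideal $I$ of $M$ is $\varphi$-invariant if it lies in the domain of every power of $\varphi$ and $\varphi(I)\subseteq I$; $\varphi$ is simple if no non-zero ideal is $\varphi$-invariant. $M$ is self-similar of index $p^k$ if it has a simple virtual endomorphism of index $p^k$. *)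

From HB Require Import structures.
From mathcomp Require Import all_boot all_order all_algebra.
From mathcomp Require Import boolp.
From Stdlib Require Import ProofIrrelevance FunctionalExtensionality.
Set Implicit Arguments. Unset Strict Implicit. Unset Printing Implicit Defensive.
Import Order.TTheory GRing.Theory Num.Theory.
Local Open Scope ring_scope.

(* The ring Z_p of p-adic integers, as the inverse limit of Z/p^n Z:   *)
(* coherent sequences (x_n)_n with x_n in [0, p^n) and                 *)
(* x_{n+1} = x_n mod p^n.  As for 'F_p in MathComp, the modulus used   *)
(* is q := maxn p 2, which equals p for every prime p.                *)

Section Padic.
Variable p : nat.
Definition zp_base : nat := maxn p 2.
Definition zpM (n : nat) : int := (zp_base ^ n)%:Z.

Definition zp_coherent (x : nat -> int) : Prop :=
  forall n, x n = modz (x n.+1) (zpM n).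

Definition zp : Type := {x : nat -> int | zp_coherent x}.

Lemma zpM_S n : zpM n.+1 = (zp_base%:Z * zpM n)%R.
Proof. by rewrite /zpM expnS PoszM. Qed.

Lemma modz_dvd_mul (m c d : int) : modz (modz m (c * d)) d = modz m d.
Proof.
by rewrite {2}(divz_eq m (c * d)) mulrA modzMDl.
Qed.

Lemma zp_mkP (f : nat -> int) :
  (forall n, modz (f n.+1) (zpM n) = modz (f n) (zpM n)) ->
  zp_coherent (fun n => modz (f n) (zpM n)).
Proof. by move=> Hf n; rewrite zpM_S modz_dvd_mul Hf. Qed.

Lemma zp_red (x : zp) n : modz (sval x n) (zpM n) = sval x n.
Proof. by case: x => x Hx /=; rewrite Hx modz_mod. Qed.

Lemma zp_cohS (x : zp) n : modz (sval x n.+1) (zpM n) = sval x n.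
Proof. by case: x => x Hx /=; rewrite -Hx. Qed.

Lemma zp_eq (x y : zp) : (forall n, sval x n = sval y n) -> x = y.
Proof.
case: x y => [x Hx] [y Hy] /= H.
have E : x = y by apply: functional_extensionality.
subst y; by rewrite (proof_irrelevance _ Hx Hy).
Qed.

HB.instance Definition _ := gen_eqMixin zp.
HB.instance Definition _ := gen_choiceMixin zp.

Definition zp_mk (f : nat -> int)
  (Hf : forall n, modz (f n.+1) (zpM n) = modz (f n) (zpM n)) : zp :=
  exist _ _ (zp_mkP Hf).

Lemma zp_addP (x y : zp) n :
  modz (sval x n.+1 + sval y n.+1) (zpM n) = modz (sval x n + sval y n) (zpM n).
Proof. by rewrite -modzDm !zp_cohS. Qed.
Lemma zp_mulP (x y : zp) n :
  modz (sval x n.+1 * sval y n.+1) (zpM n) = modz (sval x n * sval y n) (zpM n).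
Proof. by rewrite -modzMm !zp_cohS. Qed.
Lemma zp_oppP (x : zp) n :
  modz (- sval x n.+1) (zpM n) = modz (- sval x n) (zpM n).
Proof. by rewrite -modzNm !zp_cohS. Qed.
Lemma zp_cstP (c : int) n : modz c (zpM n) = modz c (zpM n). Proof. by []. Qed.

Definition zp_add (x y : zp) : zp := zp_mk (zp_addP x y).
Definition zp_mul (x y : zp) : zp := zp_mk (zp_mulP x y).
Definition zp_opp (x : zp) : zp := zp_mk (zp_oppP x).
Definition zp_zero : zp := zp_mk (fun n => zp_cstP 0 n).
Definition zp_one : zp := zp_mk (fun n => zp_cstP 1 n).

Lemma zp_addA : associative zp_add.
Proof.
move=> x y z; apply: zp_eq => n /=.
by rewrite modzDml modzDmr addrA.
Qed.
Lemma zp_addC : commutative zp_add.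
Proof. by move=> x y; apply: zp_eq => n /=; rewrite addrC. Qed.
Lemma zp_add0 : left_id zp_zero zp_add.
Proof. by move=> x; apply: zp_eq => n /=; rewrite modzDml add0r zp_red. Qed.
Lemma zp_addN : left_inverse zp_zero zp_opp zp_add.
Proof. by move=> x; apply: zp_eq => n /=; rewrite modzDml addNr. Qed.

HB.instance Definition _ := GRing.isZmodule.Build zp zp_addA zp_addC zp_add0 zp_addN.

Lemma zp_mulA : associative zp_mul.
Proof.
move=> x y z; apply: zp_eq => n /=.
by rewrite modzMml modzMmr mulrA.
Qed.
Lemma zp_mulC : commutative zp_mul.
Proof. by move=> x y; apply: zp_eq => n /=; rewrite mulrC. Qed.
Lemma zp_mul1 : left_id zp_one zp_mul.
Proof. by move=> x; apply: zp_eq => n /=; rewrite modzMml mul1r zp_red. Qed.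
Lemma zp_mulD : left_distributive zp_mul zp_add.
Proof.
move=> x y z; apply: zp_eq => n /=.
by rewrite modzMml modzDm mulrDl.
Qed.
Lemma zp_one_neq0 : zp_one != zp_zero.
Proof.
apply/eqP => /(congr1 (fun x : zp => sval x 1)) /=.
rewrite /zpM expn1 modz_small ?mod0z //.
by rewrite /zp_base; apply/andP; split => //; rewrite ltz_nat; apply: leq_trans (leq_maxr _ _).
Qed.

HB.instance Definition _ :=
  GRing.Zmodule_isComNzRing.Build zp zp_mulA zp_mulC zp_mul1 zp_mulD zp_one_neq0.

End Padic.

Section LieLattice.
Variables (R : comNzRingType) (n : nat).
Local Notation V := 'rV[R]_n.

Definition struct_bracket (B : 'I_n -> 'I_n -> V) (u v : V) : V :=
  \sum_(i < n) \sum_(j < n) (u 0 i * v 0 j) *: B i j.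

Variable br : V -> V -> V.

Definition submodule (S : V -> Prop) : Prop :=
  [/\ S 0, (forall x y, S x -> S y -> S (x + y)) &
      (forall (c : R) x, S x -> S (c *: x))].

Definition subalgebra (M N : V -> Prop) : Prop :=
  [/\ submodule N, (forall x, N x -> M x) &
      (forall x y, N x -> N y -> N (br x y))].

Definition has_index (M N : V -> Prop) (k : nat) : Prop :=
  exists r : 'I_k -> V,
    [/\ (forall i, M (r i)),
        (forall i j, N (r i - r j) -> i = j) &
        (forall x, M x -> exists i, N (x - r i))].

Definition finite_index (M N : V -> Prop) : Prop := exists k, has_index M N k.

Definition ideal (M I : V -> Prop) : Prop :=
  [/\ submodule I, (forall x, I x -> M x) &
      (forall x y, M x -> I y -> I (br x y))].

(* (phi is represented by a total map, only its values on N matter).  *)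
Definition virtual_endo (M N : V -> Prop) (phi : V -> V) (k : nat) : Prop :=
  [/\ subalgebra M N, has_index M N k,
      (forall x, N x -> M (phi x)) &
   [/\

      (forall x y, N x -> N y -> phi (x + y) = phi x + phi y),
      (forall (c : R) x, N x -> phi (c *: x) = c *: phi x) &
      (forall x y, N x -> N y -> phi (br x y) = br (phi x) (phi y))]].

Fixpoint pow_dom (M N : V -> Prop) (phi : V -> V) (m : nat) : V -> Prop :=
  match m with
  | 0 => M
  | m'.+1 => fun x => pow_dom M N phi m' x /\ N (iter m' phi x)
  end.

Definition phi_invariant (M N : V -> Prop) (phi : V -> V) (I : V -> Prop) : Prop :=
  (forall m x, I x -> pow_dom M N phi m x) /\ (forall x, I x -> I (phi x)).

Definition simple_ve (M N : V -> Prop) (phi : V -> V) : Prop :=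
  forall I, ideal M I -> phi_invariant M N phi I -> forall x, I x -> x = 0.

Definition self_similar_index (M : V -> Prop) (k : nat) : Prop :=
  exists (N : V -> Prop) (phi : V -> V), virtual_endo M N phi k /\ simple_ve M N phi.

End LieLattice.

(* The d-tuple (a_1,..,a_d) is a : 'I_d -> R with a_i = a (i-1).       *)
Definition Lcoef (R : comNzRingType) (d : nat) (a : 'I_d -> R) (k : nat) : R :=
  if insub k.-1 is Some i then (if (1 <= k)%N then a i else 0) else 0.

Definition Ltable (R : comNzRingType) (d : nat) (a : 'I_d -> R)
    (i j : 'I_d.+1) : 'rV[R]_d.+1 :=
  \row_(k < d.+1)
    (if (i == 0 :> nat) && (j == 1 :> nat) then Lcoef a k
     else if (i == 1 :> nat) && (j == 0 :> nat) then - Lcoef a k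
     else if (i == 0 :> nat) && (2 <= j)%N then ((k : nat) == j.-1)%:R
     else if (j == 0 :> nat) && (2 <= i)%N then - ((k : nat) == i.-1)%:R
     else 0).

Definition Lbracket (R : comNzRingType) (d : nat) (a : 'I_d -> R) :=
  struct_bracket (Ltable a).

From HB Require Import structures.
From mathcomp Require Import all_boot all_order all_algebra.
From mathcomp Require Import boolp.
From mathcomp Require Import ring zify.
Set Implicit Arguments. Unset Strict Implicit. Unset Printing Implicit Defensive.
Import Order.TTheory GRing.Theory Num.Theory.
Local Open Scope ring_scope.

(* Take H = pL + Z_p x_d, of index p^d in L.  Let phi : N -> H be
   a virtual endomorphism of index p.  Since [H : N] = p we have pH <= N, so
   p^2 L <= N, and bracketing with p^2 x_0 shows that phi preserves the
   hyperplane of vectors with zero x_0-coordinate.  If no element of N has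
   x_0-coordinate exactly p, then N contains that hyperplane of H, which is a
   phi-invariant ideal.  Otherwise take n_0 in N with x_0-coordinate p and
   write p c for the x_0-coordinate of phi(n_0): bracketing with n_0 gives
   phi(p ad(x_0) z) = p c ad(x_0) phi(z), and iterating from p x_d shows that
   the ideal p^(2d) ad(x_0)^d(L), which contains p^(2d) [x_0, x_1] <> 0, is
   phi-invariant.  Either way phi is not simple. *)

Section PadicIntegers.
Variable p : nat.
Hypothesis p_prime : prime p.
Local Notation R := (zp p).
Local Notation P := (p%:R : R).

Lemma zp_base_prime : zp_base p = p.
Proof. by apply/maxn_idPl; apply: prime_gt1. Qed.

Lemma zpM1 : zpM p 1 = p%:Z.
Proof. by rewrite /zpM expn1 zp_base_prime. Qed.

Lemma zpM_gt0 n : 0 < zpM p n.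
Proof. by rewrite /zpM ltz_nat expn_gt0 zp_base_prime prime_gt0. Qed.

Lemma svalD (x y : R) n : sval (x + y) n = ((sval x n + sval y n) %% zpM p n)%Z.
Proof. by []. Qed.
Lemma svalM (x y : R) n : sval (x * y) n = ((sval x n * sval y n) %% zpM p n)%Z.
Proof. by []. Qed.
Lemma svalN (x : R) n : sval (- x) n = ((- sval x n) %% zpM p n)%Z.
Proof. by []. Qed.
Lemma sval0 n : sval (0 : R) n = 0.
Proof. exact: mod0z. Qed.

Lemma sval_natr (m : nat) n : sval (m%:R : R) n = (m%:Z %% zpM p n)%Z.
Proof.
elim: m => [|m IH]; first by rewrite sval0 mod0z.
by rewrite -addn1 natrD PoszD svalD IH modzDm.
Qed.

Lemma sval_ge0 (x : R) n : 0 <= sval x n.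
Proof. by rewrite -zp_red modz_ge0 // gt_eqF // zpM_gt0. Qed.

Lemma sval_lt (x : R) n : sval x n < zpM p n.
Proof. by rewrite -zp_red ltz_pmod // zpM_gt0. Qed.

Lemma sval_leq (x : R) m n : (m <= n)%N -> sval x m = (sval x n %% zpM p m)%Z.
Proof.
elim: n => [|n IH]; first by rewrite leqn0 => /eqP->; rewrite zp_red.
rewrite leq_eqVlt => /orP[/eqP->|mn]; first by rewrite zp_red.
have zpM_split : zpM p n = ((zp_base p ^ (n - m))%:Z * zpM p m)%R.
  by rewrite /zpM -PoszM -expnD subnK.
by rewrite IH // -(zp_cohS x n) zpM_split modz_dvd_mul.
Qed.

Lemma zp_eq0 (x : R) : (forall n, sval x n = 0) -> x = 0.
Proof. by move=> x0; apply: zp_eq => n; rewrite x0 sval0. Qed.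

Definition pZp (x : R) : Prop := exists y, x = P * y.

Lemma pZpP (x : R) : pZp x <-> sval x 1 = 0.
Proof.
split=> [[y ->]|x1]; first by rewrite svalM sval_natr zpM1 modzz mul0r mod0z.
have p_gt0 : 0 < p%:Z by rewrite ltz_nat prime_gt0.
have p_dvd n : (0 < n)%N -> (p%:Z %| sval x n)%Z.
  by move=> n_gt0; apply/dvdz_mod0P; rewrite -zpM1 -sval_leq.
pose f n := (sval x n.+1 %/ p%:Z)%Z.
have f_coh n : (f n.+1 %% zpM p n)%Z = (f n %% zpM p n)%Z.
  rewrite /f -(zp_cohS x n.+1) zpM_S zp_base_prime.
  rewrite [_ * zpM p n]mulrC -(divzK (p_dvd n.+2 isT)) -mulz_modl // !mulzK ?gt_eqF //.
  by rewrite modz_mod.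
exists (zp_mk f_coh); apply: zp_eq => n /=.
by rewrite sval_natr modzMml modzMmr /f mulrC divzK ?zp_cohS ?p_dvd.
Qed.

Lemma pZp_pmul (y : R) : pZp (P * y).
Proof. by exists y. Qed.

Lemma pZp0 : pZp 0.
Proof. by exists 0; rewrite mulr0. Qed.

Lemma pZpD (x y : R) : pZp x -> pZp y -> pZp (x + y).
Proof. by move=> [u ->] [v ->]; exists (u + v); rewrite mulrDr. Qed.

Lemma pZpN (x : R) : pZp x -> pZp (- x).
Proof. by move=> [u ->]; exists (- u); rewrite mulrN. Qed.

Lemma pZpMl (c x : R) : pZp x -> pZp (c * x).
Proof. by move=> [u ->]; exists (c * u); rewrite mulrCA. Qed.

Lemma pZp_row n (v : 'rV[R]_n) : (forall k, pZp (v 0 k)) -> exists w, v = P *: w.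
Proof.
move=> v_pZp; have [w vw] := choice v_pZp.
by exists (\row_k w k); apply/rowP => k; rewrite !mxE vw.
Qed.

Lemma sval1B (x y : R) : sval (x - y) 1 = modz (sval x 1 - sval y 1) p.
Proof. by rewrite svalD svalN zpM1 modzDmr. Qed.

Lemma natr_pZpB_eq (m n : nat) :
  (m < p)%N -> (n < p)%N -> pZp (m%:R - n%:R) -> m = n.
Proof.
move=> m_lt n_lt /pZpP; rewrite sval1B !sval_natr zpM1.
move/dvdz_mod0P; rewrite -eqz_mod_dvd => /eqP.
by rewrite !modz_small ?lez_nat ?ltz_nat // => -[].
Qed.

Lemma sval1_lt (x : R) : (`|sval x 1| < p)%N.
Proof.
have := sval_lt x 1%N; rewrite zpM1 -ltz_nat gez0_abs //; exact: sval_ge0.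
Qed.

Lemma pZpB_sval1 (x : R) : pZp (x - `|sval x 1|%:R).
Proof.
by apply/pZpP; rewrite sval1B sval_natr gez0_abs ?sval_ge0 // zp_red subrr mod0z.
Qed.

Lemma zp_natr_unit (m : nat) : (0 < m < p)%N -> exists u : R, u * m%:R = 1.
Proof.
case/andP=> m_gt0 m_lt.
have m_coprime n : coprimez m%:Z (zpM p n).
  rewrite coprimezE /zpM zp_base_prime !absz_nat; apply: coprimeXr.
  rewrite coprime_sym prime_coprime //.
  by apply/negP => /(dvdn_leq m_gt0); rewrite leqNgt m_lt.
pose f n := projT1 (Bezoutz m%:Z (zpM p n)).
have f_bezout n : exists v, f n * m%:Z + v * zpM p n = 1.
  rewrite /f; case: (Bezoutz _ _) => u [v uv] /=; exists v.
  by rewrite uv; apply/eqP; apply: m_coprime.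
have f_coh n : (f n.+1 %% zpM p n)%Z = (f n %% zpM p n)%Z.
  apply/eqP; rewrite eqz_mod_dvd -(@Gauss_dvdzl _ _ m%:Z); last first.
    by rewrite coprimez_sym.
  have [v1 fv1] := f_bezout n.+1; have [v0 fv0] := f_bezout n.
  have -> : (f n.+1 - f n) * m%:Z = (v0 - v1 * (zp_base p)%:Z) * zpM p n.
    apply/eqP; rewrite -subr_eq0; apply/eqP.
    transitivity ((f n.+1 * m%:Z + v1 * zpM p n.+1) - (f n * m%:Z + v0 * zpM p n)).
      by rewrite zpM_S; ring.
    by rewrite fv1 fv0 subrr.
  exact: dvdz_mull.
exists (zp_mk f_coh); apply: zp_eq => n /=.
rewrite sval_natr modzMml modzMmr.
have [v fv] := f_bezout n.
have -> : f n * m%:Z = (- v) * zpM p n + 1 by rewrite -fv; ring.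
by rewrite modzMDl.
Qed.

Lemma zp_neq0_sval (x : R) : x != 0 -> exists n, sval x n != 0.
Proof.
move=> x_neq0; apply: contrapT => no_n; move/eqP: x_neq0; apply.
by apply: zp_eq0 => n; apply/eqP; apply: contraT => xn; case: no_n; exists n.
Qed.

Lemma zp_mulf_eq0 (x y : R) : (x * y == 0) = (x == 0) || (y == 0).
Proof.
apply/idP/idP => [/eqP xy0|/orP[]/eqP->]; rewrite ?mul0r ?mulr0 //.
apply/negPn/negP; rewrite negb_or => /andP[/zp_neq0_sval[n xn] /zp_neq0_sval[m ym]].
have := congr1 (fun z : R => sval z (n + m)%N) xy0.
rewrite svalM sval0; set X := sval x _; set Y := sval y _.
have X_ndvd : ~~ (zpM p n %| X)%Z.
  by apply: contra xn => /dvdz_mod0P; rewrite /X -sval_leq ?leq_addr // => ->.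
have Y_ndvd : ~~ (zpM p m %| Y)%Z.
  by apply: contra ym => /dvdz_mod0P; rewrite /Y -sval_leq ?leq_addl // => ->.
move/dvdz_mod0P; move: X_ndvd Y_ndvd.
rewrite !dvdzE abszM /zpM !absz_nat zp_base_prime => X_ndvd Y_ndvd.
have X_gt0 : (0 < `|X|)%N by rewrite lt0n; apply: contra X_ndvd => /eqP->.
have Y_gt0 : (0 < `|Y|)%N by rewrite lt0n; apply: contra Y_ndvd => /eqP->.
move: X_ndvd Y_ndvd; rewrite !pfactor_dvdn ?muln_gt0 ?X_gt0 ?Y_gt0 // lognM //.
rewrite -!ltnNge; lia.
Qed.

Lemma zp_mulf_neq0 (x y : R) : x != 0 -> y != 0 -> x * y != 0.
Proof. by move=> x_neq0 y_neq0; rewrite zp_mulf_eq0 negb_or x_neq0. Qed.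

Lemma zp_mulfI (c : R) : c != 0 -> injective ( *%R c).
Proof.
move=> c_neq0 x y /= cxy; apply/eqP; rewrite -subr_eq0.
by move: (zp_mulf_eq0 c (x - y)); rewrite mulrBr cxy subrr eqxx (negbTE c_neq0) orFb => <-.
Qed.

Lemma zp_natr_p_neq0 : P != 0.
Proof.
apply/negP => /eqP/(congr1 (fun z : R => sval z 2)).
rewrite sval_natr sval0 /zpM zp_base_prime modz_small; last first.
  by rewrite lez_nat ltz_nat /= -{1}(expn1 p) ltn_exp2l ?prime_gt1.
by move/eqP; rewrite eqz_nat; apply/negP; rewrite -lt0n prime_gt0.
Qed.

Lemma zp_expf_neq0 (x : R) k : x != 0 -> x ^+ k != 0.
Proof.
move=> x_neq0; elim: k => [|k IHk]; first by rewrite expr0 oner_neq0.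
by rewrite exprS zp_mulf_neq0.
Qed.
End PadicIntegers.

Section Submodules.
Variables (R : comNzRingType) (n : nat).
Local Notation V := 'rV[R]_n.
Variable S : V -> Prop.
Hypothesis S_sub : submodule S.

Lemma submodule0 : S 0.
Proof. by case: S_sub. Qed.

Lemma submoduleD x y : S x -> S y -> S (x + y).
Proof. by case: S_sub => _ + _; apply. Qed.

Lemma submoduleZ (c : R) x : S x -> S (c *: x).
Proof. by case: S_sub => _ _; apply. Qed.

Lemma submoduleB x y : S x -> S y -> S (x - y).
Proof. by move=> Sx Sy; rewrite -scaleN1r; apply: submoduleD (submoduleZ _ _). Qed.

Lemma submodule_sum (I : finType) (c : I -> R) (F : I -> V) :
  (forall i, S (F i)) -> S (\sum_i c i *: F i).
Proof.
by move=> SF; apply: (big_ind S) => [|x y|i _]; [exact: submodule0 | exact: submoduleD |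
  exact: submoduleZ].
Qed.

End Submodules.

Section RowCoordinates.
Variables (R : comPzRingType) (n : nat).
Local Notation V := 'rV[R]_n.+1.

Lemma erowE (i k : 'I_n.+1) : ('e_i : V) 0 k = (k == i)%:R.
Proof. by rewrite mxE. Qed.

Lemma erow_coord0 (i : 'I_n.+1) : i != 0 -> ('e_i : V) 0 0 = 0.
Proof. by move=> i_neq0; rewrite erowE eq_sym (negbTE i_neq0). Qed.

Lemma coordZ (c : R) (v : V) k : (c *: v) 0 k = c * v 0 k.
Proof. by rewrite mxE. Qed.

Lemma coordB (u v : V) k : (u - v) 0 k = u 0 k - v 0 k.
Proof. by rewrite !mxE. Qed.

Lemma scale_row_sum_delta (c : R) (u : V) : c *: u = \sum_k u 0 k *: (c *: 'e_k).
Proof.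
rewrite {1}(row_sum_delta u) scaler_sumr; apply: eq_bigr => k _.
by rewrite !scalerA mulrC.
Qed.

Lemma sum_scale_coord (I : finType) (c : I -> R) (F : I -> V) k :
  (\sum_i c i *: F i) 0 k = \sum_i c i * F i 0 k.
Proof. by rewrite summxE; apply: eq_bigr => i _; rewrite mxE. Qed.

End RowCoordinates.

Section IndexPrime.
Variables (p n : nat).
Hypothesis p_prime : prime p.
Local Notation R := (zp p).
Local Notation V := 'rV[R]_n.
Variables (M N : V -> Prop).
Hypotheses (M_sub : submodule M) (N_sub : submodule N).

Lemma submodule_natr_unit (m : nat) y : (0 < m < p)%N -> N (m%:R *: y) -> N y.
Proof.
move=> m_unit Nmy; have [u um] := zp_natr_unit p_prime m_unit.
by have := submoduleZ N_sub u Nmy; rewrite scalerA um scale1r.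
Qed.

Lemma submodule_natr_collision (k : nat) (j j' : 'I_k) y z :
  j != j' -> N (j%:R *: y - z) -> N (j'%:R *: y - z) ->
  exists2 m, (0 < m < k)%N & N (m%:R *: y).
Proof.
wlog j'_lt : j j' / (j' < j)%N.
  move=> wlog_lt; case: (ltngtP j j') => [j_lt|j'_lt|/val_inj->]; last by rewrite eqxx.
    by move=> ne Nj Nj'; apply: (wlog_lt j' j) => //; rewrite eq_sym.
  exact: wlog_lt.
move=> _ Nj Nj'; exists (j - j')%N.
  by rewrite subn_gt0 j'_lt; apply: leq_ltn_trans (leq_subr _ _) (ltn_ord j).
have := submoduleB N_sub Nj Nj'.
by rewrite opprB addrA subrK natrB ?(ltnW j'_lt) // scalerBl.
Qed.

Hypothesis N_index : has_index M N p.

Lemma index_prime_scale y : M y -> N (p%:R *: y).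
Proof.
move=> My; case: N_index => r [_ _ r_cover].
have [g Ng] := choice (fun j : 'I_p.+1 => r_cover _ (submoduleZ M_sub (j : nat)%:R My)).
have : ~~ injectiveb g.
  by apply/injectiveP => /leq_card; rewrite !card_ord ltnn.
case/injectivePn => j [j' ne gjj'].
have Nj' := Ng j'; rewrite -gjj' in Nj'.
have [m /andP[m_gt0]] := submodule_natr_collision ne (Ng j) Nj'.
rewrite ltnS leq_eqVlt => /orP[/eqP->|m_lt] // Nmy.
by apply: (submoduleZ N_sub); apply: (submodule_natr_unit _ Nmy); rewrite m_gt0.
Qed.

Lemma index_prime_cover y : M y -> ~ N y ->
  forall x, M x -> exists2 j, (j < p)%N & N (x - j%:R *: y).
Proof.
move=> My Ny x Mx; case: N_index => r [_ _ r_cover].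
have [g Ng] := choice (fun j : 'I_p => r_cover _ (submoduleZ M_sub (j : nat)%:R My)).
have g_inj : injective g.
  move=> j j' gjj'; apply/eqP; apply: contraT => ne.
  have Nj' := Ng j'; rewrite -gjj' in Nj'.
  have [m m_unit Nmy] := submodule_natr_collision ne (Ng j) Nj'.
  by case: Ny; apply: submodule_natr_unit Nmy.
have [g' gK g'K] := injF_bij g_inj.
have [i Nxi] := r_cover x Mx; exists (g' i) => //.
have := submoduleB N_sub Nxi (Ng (g' i)).
by rewrite g'K opprB addrA subrK.
Qed.

End IndexPrime.

Section Invariance.
Variables (R : comNzRingType) (n : nat).
Local Notation V := 'rV[R]_n.
Variables (M N I : V -> Prop) (phi : V -> V).

Lemma phi_invariant_sub : (forall x, N x -> M x) -> (forall x, I x -> N x) ->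
  (forall x, I x -> I (phi x)) -> phi_invariant M N phi I.
Proof.
move=> NM IN Iphi; split=> // m x Ix.
have Iiter k : I (iter k phi x) by elim: k => //= k IHk; apply: Iphi.
by elim: m => [|m IHm] /=; [apply/NM/IN | split=> //; apply: IN].
Qed.

End Invariance.

(** * The lattice L and its subalgebra H *)

Section Lattice.
Variables (p d : nat) (a : 'I_d -> zp p).
Hypotheses (p_prime : prime p) (d_ge2 : (2 <= d)%N) (a_last : Lcoef a d != 0).
Local Notation R := (zp p).
Local Notation V := 'rV[R]_d.+1.
Local Notation P := (p%:R : R).
Local Notation br := (Lbracket a).

Let pX_neq0 k : P ^+ k != 0 := zp_expf_neq0 p_prime k (zp_natr_p_neq0 p_prime).

(* The matrix of ad(x_0) acting on row vectors: row i is [x_0, x_i]. *)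
Definition adx0 : 'M[R]_d.+1 := \matrix_(i, k)
  ((i == 1%N :> nat)%:R * Lcoef a k + ((i == k.+1 :> nat) && (0 < k < d)%N)%:R).
Local Notation D := adx0.

Lemma Ltable_adx0 (i j k : 'I_d.+1) :
  Ltable a i j 0 k = (i == 0%N :> nat)%:R * D j k - (j == 0%N :> nat)%:R * D i k.
Proof.
have cond0 : [&& 0%N == k, (0 < k)%N & (k < d)%N] = false by case: (k : nat).
have condS m : (m.+2 < d.+1)%N ->
    [&& m.+1 == k, (0 < k)%N & (k < d)%N] = ((k : nat) == m.+1).
  by move=> ltmd; rewrite eq_sym; case: eqP => //= ->.
rewrite !mxE; case: i => [[|[|i]] ltid]; case: j => [[|[|j]] ltjd] /=;
  rewrite ?eqSS ?[(_ == k.+1)%N]eq_sym ?andbF ?andbT ?cond0 ?condS //=;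
  by rewrite ?(mul1r, mul0r, mulr1, mulr0, add0r, addr0, subr0, sub0r, oppr0).
Qed.

Lemma Lbracket_adx0 (u v : V) : br u v = u 0 0 *: (v *m D) - v 0 0 *: (u *m D).
Proof.
have coord0 (w : V) : \sum_(i < d.+1) w 0 i * (i == 0%N :> nat)%:R = w 0 0.
  rewrite (bigD1 ord0) //= mulr1 big1 ?addr0 // => i i_neq0.
  by rewrite (negbTE (i_neq0 : (i : nat) != 0%N)) mulr0.
apply/rowP => k; rewrite /Lbracket /struct_bracket !mxE summxE.
transitivity (\sum_i \sum_j ((u 0 i * (i == 0%N :> nat)%:R) * (v 0 j * D j k)
                           - (u 0 i * D i k) * (v 0 j * (j == 0%N :> nat)%:R))).
  apply: eq_bigr => i _; rewrite summxE; apply: eq_bigr => j _.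
  by rewrite mxE Ltable_adx0; ring.
under eq_bigr do rewrite sumrB -!mulr_sumr.
by rewrite sumrB -!mulr_suml !coord0 mulrC [v 0 0 * _]mulrC.
Qed.

Lemma scalepI : injective (fun v : V => P *: v).
Proof.
move=> x y /= /rowP xy; apply/rowP => k; have := xy k; rewrite !mxE.
exact: (zp_mulfI p_prime (zp_natr_p_neq0 p_prime)).
Qed.

Definition avec : V := \row_k Lcoef a k.

Lemma avecE k : avec 0 k = Lcoef a k.
Proof. exact: mxE. Qed.

Lemma Lcoef0 : Lcoef a 0 = 0.
Proof. by rewrite /Lcoef; case: insub. Qed.

Lemma inord1E : (inord 1 : 'I_d.+1) = 1%N :> nat.
Proof. by rewrite inordK // ltnS ltnW. Qed.

Lemma adx0_coord (v : V) (k : 'I_d.+1) : (v *m D) 0 k =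
  v 0 (inord 1) * Lcoef a k + (if (0 < k < d)%N then v 0 (inord k.+1) else 0).
Proof.
rewrite mxE; under eq_bigr => j _ do rewrite mxE mulrDr mulrA.
rewrite big_split /= -big_distrl /=; congr (_ * _ + _).
  rewrite (bigD1 (inord 1)) //= inord1E eqxx mulr1 big1 ?addr0 // => j j_neq1.
  by move: j_neq1; rewrite -(inj_eq val_inj) /= inord1E => /negbTE->; rewrite mulr0.
case: ifP => k_mid; last by rewrite big1 // => j _; rewrite andbF mulr0.
have ltk1 : (k.+1 < d.+1)%N by rewrite ltnS; case/andP: k_mid.
rewrite (bigD1 (inord k.+1)) //= inordK // eqxx mulr1 big1 ?addr0 // => j j_neq.
by rewrite andbT; move: j_neq; rewrite -(inj_eq val_inj) /= inordK // => /negbTE->; rewrite mulr0.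
Qed.

Lemma adx0_coord0 (v : V) : (v *m D) 0 0 = 0.
Proof. by rewrite adx0_coord Lcoef0 mulr0 addr0. Qed.

Lemma Lbracket_coord0 (u v : V) : br u v 0 0 = 0.
Proof.
have := adx0_coord0 u; have := adx0_coord0 v.
by rewrite Lbracket_adx0 !mxE => -> ->; rewrite !mulr0 subr0.
Qed.

Lemma adx0_e0 : ('e_0 : V) *m D = 0.
Proof.
apply/rowP => k; rewrite adx0_coord !erowE mxE -!(inj_eq val_inj) /= inord1E mul0r add0r.
by case: ifP => // /andP[_ ltkd]; rewrite inordK.
Qed.

Lemma adx0_e1 : ('e_(inord 1) : V) *m D = avec.
Proof.
apply/rowP => k; rewrite adx0_coord !erowE eqxx mul1r mxE.
case: ifP => [/andP[k_gt0 ltkd]|]; last by rewrite addr0.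
rewrite -(inj_eq val_inj) /= inordK ?ltnS // inord1E eqSS.
by rewrite (gtn_eqF k_gt0) addr0.
Qed.

Lemma adx0_eS (i : nat) : (0 < i < d)%N -> ('e_(inord i.+1) : V) *m D = 'e_(inord i).
Proof.
case/andP=> i_gt0 ltid; have ltid1 : (i < d.+1)%N by apply: ltnW.
apply/rowP => k; rewrite adx0_coord !erowE -!(inj_eq val_inj) /= inord1E.
rewrite (inordK ltid1) (inordK (ltid : (i.+1 < d.+1)%N)).
rewrite eqSS [0%N == _]eq_sym (gtn_eqF i_gt0) mul0r add0r.
case: ifP => [/andP[_ ltkd]|k_out]; first by rewrite inordK ?eqSS.
by case: eqP k_out => // ->; rewrite i_gt0 ltid.
Qed.

Lemma adx0X_ed (m : nat) : (m < d)%N -> ('e_ord_max : V) *m D ^+ m = 'e_(inord (d - m)).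
Proof.
elim: m => [|m IHm] ltmd.
  by rewrite expr0 mulmx1 subn0; congr delta_mx; apply: val_inj; rewrite /= inordK.
rewrite exprSr mulmxA IHm ?(ltnW ltmd) //.
have -> : (d - m = (d - m.+1).+1)%N by lia.
by rewrite adx0_eS //; apply/andP; split; lia.
Qed.

Lemma adx0X_ed_d : ('e_ord_max : V) *m D ^+ d = avec.
Proof.
have d_gt0 : (0 < d)%N by apply: ltnW.
rewrite -[X in D ^+ X](prednK d_gt0) exprSr mulmxA adx0X_ed ?ltn_predL //.
by rewrite -adx0_e1; congr (delta_mx 0 (inord _) *m D); lia.
Qed.

Lemma adx0X_e0 m : (0 < m)%N -> ('e_0 : V) *m D ^+ m = 0.
Proof. by case: m => // m _; rewrite exprS mulmxA adx0_e0 mul0mx. Qed.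

Lemma adx0X_coord0 (v : V) m : (0 < m)%N -> (v *m D ^+ m) 0 0 = 0.
Proof. by case: m => // m _; rewrite exprSr mulmxA adx0_coord0. Qed.

Definition Hsub (v : V) : Prop := forall i : 'I_d.+1, (i < d)%N -> pZp (v 0 i).

Lemma Hsub_submodule : submodule Hsub.
Proof.
split=> [i _|x y Hx Hy i ltid|c x Hx i ltid]; rewrite mxE; first exact: pZp0.
  exact: pZpD (Hx i ltid) (Hy i ltid).
exact: pZpMl (Hx i ltid).
Qed.

Lemma Hsub_scale_p (v : V) : Hsub (P *: v).
Proof. by move=> i _; rewrite mxE; exact: pZp_pmul. Qed.

Lemma Hsub_scale_pX (v : V) k : (0 < k)%N -> Hsub (P ^+ k *: v).
Proof. by case: k => // k _; rewrite exprS -scalerA; exact: Hsub_scale_p. Qed.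

Lemma Hsub_ed : Hsub 'e_ord_max.
Proof. by move=> i ltid; rewrite erowE -(inj_eq val_inj) /= ltn_eqF //; exact: pZp0. Qed.

Lemma Hsub_bracket x y : Hsub x -> Hsub y -> Hsub (br x y).
Proof.
move=> Hx Hy; have ltd0 : ((0%R : 'I_d.+1) < d)%N by apply: ltnW.
rewrite Lbracket_adx0; have [u ->] := Hx 0%R ltd0; have [v ->] := Hy 0%R ltd0.
by rewrite -!scalerA -scalerBr; exact: Hsub_scale_p.
Qed.

Lemma Hsub_subalgebra : subalgebra br (fun _ => True) Hsub.
Proof. by split=> //; [exact: Hsub_submodule | exact: Hsub_bracket]. Qed.

Lemma Hsub_finite_index : finite_index (fun _ => True) Hsub.
Proof.
have d_gt0 : (0 < d)%N by apply: ltnW.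
pose k0 : 'I_d := Ordinal d_gt0.
have insubdK (i : 'I_d.+1) : (i < d)%N -> widen_ord (leqnSn d) (insubd k0 i) = i.
  by move=> ltid; apply: val_inj; rewrite /= val_insubd ltid.
pose rep (t : {ffun 'I_d -> 'I_p}) : V :=
  \row_i (if (i < d)%N then ((t (insubd k0 i) : nat)%:R : R) else 0).
exists #|{ffun 'I_d -> 'I_p}|, (fun i => rep (enum_val i)).
split=> // [i j Hij | x _].
  apply: (can_inj enum_valK); apply/ffunP => k; apply: val_inj.
  have ltkd : (widen_ord (leqnSn d) k < d)%N := ltn_ord k.
  apply: (natr_pZpB_eq p_prime (ltn_ord _) (ltn_ord _)); move: (Hij _ ltkd).
  rewrite !mxE ltkd.
  by rewrite (_ : insubd k0 _ = k) //; apply: val_inj; rewrite val_insubd /= ltn_ord.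
pose t := [ffun k => Ordinal (sval1_lt p_prime (x 0 (widen_ord (leqnSn d) k)))].
exists (enum_rank t) => i ltid; rewrite enum_rankK !mxE ltid ffunE /= insubdK //.
exact: pZpB_sval1.
Qed.

Definition Hker0 (v : V) : Prop := Hsub v /\ v 0 0 = 0.

Lemma Hker0_ideal : ideal br Hsub Hker0.
Proof.
have [H0 HD HZ] := Hsub_submodule.
split=> [|x []//|x y Hx [Hy _]]; last by split; [exact: Hsub_bracket | exact: Lbracket_coord0].
split=> [|x y [Hx x0] [Hy y0]|c x [Hx x0]]; first by split; rewrite ?mxE.
  by split; [exact: HD | rewrite mxE x0 y0 addr0].
by split; [exact: HZ | rewrite mxE x0 mulr0].
Qed.

Definition adx0X_image (v : V) : Prop := exists u, v = P ^+ (2 * d) *: (u *m D ^+ d).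

Lemma adx0X_image_ideal : ideal br Hsub adx0X_image.
Proof.
split=> [|v [u ->]|x v _ [u ->]].
- split=> [|v w [u ->] [u' ->]|c v [u ->]]; first by exists 0; rewrite mul0mx scaler0.
    by exists (u + u'); rewrite mulmxDl scalerDr.
  by exists (c *: u); rewrite -scalemxAl !scalerA mulrC.
- by apply: Hsub_scale_pX; rewrite muln_gt0 (ltnW d_ge2).
- have v0 : (P ^+ (2 * d) *: (u *m D ^+ d)) 0 0 = 0.
    by rewrite mxE adx0X_coord0 ?mulr0 // ltnW.
  exists (x 0 0 *: (u *m D)); rewrite Lbracket_adx0 v0 scale0r subr0.
  by rewrite -scalemxAl -!scalemxAl !scalerA mulrC -!mulmxA !mulmxE -exprS -exprSr.
Qed.

(** * Virtual endomorphisms of H of index p *)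

Section VirtualEndomorphism.
Variables (N : V -> Prop) (phi : V -> V).
Hypothesis N_sub : submodule N.
Hypothesis N_H : forall x, N x -> Hsub x.
Hypothesis N_bracket : forall x y, N x -> N y -> N (br x y).
Hypothesis N_index : has_index Hsub N p.
Hypothesis phi_H : forall x, N x -> Hsub (phi x).
Hypothesis phiD : forall x y, N x -> N y -> phi (x + y) = phi x + phi y.
Hypothesis phiZ : forall (c : R) x, N x -> phi (c *: x) = c *: phi x.
Hypothesis phi_bracket : forall x y, N x -> N y -> phi (br x y) = br (phi x) (phi y).

Lemma N_scale_p y : Hsub y -> N (P *: y).
Proof. exact: (index_prime_scale p_prime Hsub_submodule N_sub N_index). Qed.

Lemma N_scale_pX k v : (1 < k)%N -> N (P ^+ k *: v).
Proof.
by case: k => [|[|k]] // _; rewrite exprS -scalerA; apply/N_scale_p/Hsub_scale_pX.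
Qed.

Lemma phi0 : phi 0 = 0.
Proof. by rewrite -(scale0r 0) phiZ ?scale0r //; exact: submodule0. Qed.

Lemma phi_lincomb (I : finType) (c : I -> R) (F : I -> V) : (forall i, N (F i)) ->
  phi (\sum_i c i *: F i) = \sum_i c i *: phi (F i).
Proof.
move=> NF; suff [] : N (\sum_i c i *: F i) /\ phi (\sum_i c i *: F i) = \sum_i c i *: phi (F i).
  by [].
apply: (big_rec2 (fun x y => N x /\ phi x = y)) => [|i x y _ [Nx <-]].
  by split; [exact: submodule0 | exact: phi0].
have NcF : N (c i *: F i) by apply: submoduleZ.
by split; [exact: submoduleD | rewrite phiD ?phiZ].
Qed.

Lemma phi_p2_adx0_coord0 w : N w -> w 0 0 = 0 -> phi (P ^+ 2 *: (w *m D)) 0 0 = 0.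
Proof.
move=> Nw w0; have N_px0 := N_scale_pX 'e_0 (isT : (1 < 2)%N).
have <- : br (P ^+ 2 *: 'e_0) w = P ^+ 2 *: (w *m D).
  by rewrite Lbracket_adx0 w0 scale0r subr0 mxE erowE eqxx mulr1.
by rewrite phi_bracket // Lbracket_coord0.
Qed.

(* [p^2 x_0, p^2 x_(i+1)] = p^4 x_i settles 0 < i < d; then
   p^4 [x_0, x_1] = sum_k a_k p^4 x_k settles x_d, as a_d <> 0. *)
Lemma phi_p4_e_coord0 (k : 'I_d.+1) : k != 0 -> phi (P ^+ 4 *: 'e_k) 0 0 = 0.
Proof.
have p2_adx0 (x : V) : P ^+ 2 *: ((P ^+ 2 *: x) *m D) = P ^+ 4 *: (x *m D).
  by rewrite -scalemxAl scalerA -exprD.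
have e_coord0 (i : 'I_d.+1) : i != 0 -> (P ^+ 2 *: ('e_i : V)) 0 0 = 0.
  by move=> i_neq0; rewrite !mxE eq_sym (negbTE i_neq0) andbF mulr0.
have mid (i : 'I_d.+1) : (0 < i < d)%N -> phi (P ^+ 4 *: 'e_i) 0 0 = 0.
  move=> i_mid; have i1_lt : (i.+1 < d.+1)%N by case/andP: i_mid.
  rewrite -[i]inord_val -adx0_eS // -p2_adx0.
  apply: phi_p2_adx0_coord0; first exact: N_scale_pX.
  by apply: e_coord0; rewrite -(inj_eq val_inj) /= inordK.
have last : phi (P ^+ 4 *: 'e_ord_max) 0 0 = 0.
  have e1_neq0 : (inord 1 : 'I_d.+1) != 0 by rewrite -(inj_eq val_inj) /= inord1E.
  have := phi_p2_adx0_coord0 (N_scale_pX 'e_(inord 1) (isT : (1 < 2)%N)) (e_coord0 _ e1_neq0).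
  rewrite p2_adx0 adx0_e1 scale_row_sum_delta phi_lincomb => [|j]; last exact: N_scale_pX.
  rewrite sum_scale_coord (bigD1 ord_max) //= big1 ?addr0 => [|j j_neq].
    by move/eqP; rewrite (zp_mulf_eq0 p_prime) avecE (negbTE a_last) => /eqP.
  have [->|j_neq0] := eqVneq j 0; first by rewrite avecE Lcoef0 mul0r.
  rewrite mid ?mulr0 // lt0n j_neq0 /= ltn_neqAle -ltnS ltn_ord andbT.
  by apply: contra j_neq => /eqP j_d; apply/eqP/val_inj.
move=> k_neq0; have [->|k_neq] := eqVneq k ord_max; first exact: last.
apply: mid; rewrite lt0n k_neq0 /= ltn_neqAle -ltnS ltn_ord andbT.
by apply: contra k_neq => /eqP k_d; apply/eqP/val_inj.
Qed.

Lemma phi_coord0 z : N z -> z 0 0 = 0 -> phi z 0 0 = 0.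
Proof.
move=> Nz z0; have : phi (P ^+ 4 *: z) 0 0 = 0.
  rewrite scale_row_sum_delta phi_lincomb => [|k]; last exact: N_scale_pX.
  rewrite sum_scale_coord big1 // => k _.
  have [->|k_neq0] := eqVneq k 0; first by rewrite z0 mul0r.
  by rewrite phi_p4_e_coord0 ?mulr0.
rewrite phiZ // mxE => /eqP; rewrite (zp_mulf_eq0 p_prime) => /orP[|/eqP //].
by rewrite (negbTE (pX_neq0 4)).
Qed.

Lemma Hker0_sub_N : ~ (exists2 n0, N n0 & n0 0 0 = P) -> forall y, Hker0 y -> N y.
Proof.
move=> no_n0 y [Hy y0]; apply: contrapT => Ny.
have [j _ Nj] :=
  index_prime_cover p_prime Hsub_submodule N_sub N_index Hy Ny (Hsub_scale_p 'e_0).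
by apply: no_n0; exists (P *: 'e_0 - j%:R *: y) => //; rewrite !mxE y0 eqxx mulr0 subr0 mulr1.
Qed.

Lemma not_simple_without_p : ~ (exists2 n0, N n0 & n0 0 0 = P) -> ~ simple_ve br Hsub N phi.
Proof.
move=> no_n0 simple; have Hker0_N := Hker0_sub_N no_n0.
have inv : phi_invariant Hsub N phi Hker0.
  apply: phi_invariant_sub => // x [Hx x0].
  have Nx := Hker0_N x (conj Hx x0).
  by split; [exact: phi_H | exact: phi_coord0].
have ed_Hker0 : Hker0 'e_ord_max.
  by split; [exact: Hsub_ed | rewrite erow_coord0 // -(inj_eq val_inj) /= gtn_eqF // ltnW].
move/rowP/(_ ord_max): (simple _ Hker0_ideal inv _ ed_Hker0).
by rewrite erowE mxE eqxx => /eqP; rewrite oner_eq0.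
Qed.

Lemma adx0X_image_sub_N v : adx0X_image v -> N v.
Proof. by move=> [u ->]; apply: N_scale_pX; rewrite mulSn ltn_addr // ltnW. Qed.

Section TranslateByP.
Variables (n0 : V) (c : R).
Hypotheses (N_n0 : N n0) (n0_coord0 : n0 0 0 = P) (phi_n0_coord0 : phi n0 0 0 = P * c).

Lemma bracket_n0 (z : V) : z 0 0 = 0 -> br n0 z = P *: (z *m D).
Proof. by move=> z0; rewrite Lbracket_adx0 n0_coord0 z0 scale0r subr0. Qed.

Lemma N_p_adx0 z : N z -> z 0 0 = 0 -> N (P *: (z *m D)).
Proof. by move=> Nz z0; rewrite -bracket_n0 //; exact: N_bracket. Qed.

Lemma phi_p_adx0 z : N z -> z 0 0 = 0 -> phi (P *: (z *m D)) = (P * c) *: (phi z *m D).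
Proof.
move=> Nz z0; rewrite -bracket_n0 // phi_bracket // Lbracket_adx0 phi_n0_coord0.
by rewrite phi_coord0 // scale0r subr0.
Qed.

Let ed_coord0 : ('e_ord_max : V) 0 0 = 0.
Proof. by rewrite erow_coord0 // -(inj_eq val_inj) /= gtn_eqF // ltnW. Qed.

Let epred_coord0 : ('e_(inord d.-1) : V) 0 0 = 0.
Proof. by rewrite erow_coord0 // -(inj_eq val_inj) /= inordK //; lia. Qed.

Let adx0_ed : ('e_ord_max : V) *m D = 'e_(inord d.-1).
Proof. by rewrite -[D]expr1 adx0X_ed ?subn1 // ltnW. Qed.

Lemma N_p_e_pred : N (P *: 'e_(inord d.-1)).
Proof.
have [Ned|Ned] := pselect (N 'e_ord_max).
  by rewrite -adx0_ed; apply: N_p_adx0.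
have [j ltjp] := index_prime_cover p_prime Hsub_submodule N_sub N_index Hsub_ed Ned
  (Hsub_scale_p 'e_(inord d.-1)).
set u := _ - _ => Nu.
have u0 : u 0 0 = 0.
  by rewrite coordB !coordZ ed_coord0 epred_coord0 !mulr0 subr0.
have NPu := N_p_adx0 Nu u0.
have NPw : N (P *: ((P *: 'e_(inord d.-1)) *m D)).
  by apply: N_scale_p; rewrite -scalemxAl; exact: Hsub_scale_p.
have := submoduleB N_sub NPw NPu.
rewrite -scalerBr -mulmxBl /u opprB addrC subrK -scalemxAl adx0_ed.
rewrite scalerA mulrC -scalerA => Nj.
have [j0|j_neq0] := eqVneq j 0%N; first by move: Nu; rewrite /u j0 scale0r subr0.
by apply: (submodule_natr_unit p_prime N_sub _ Nj); rewrite lt0n j_neq0.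
Qed.

Local Notation zeta := (phi (P *: 'e_ord_max)).

Let N_p_ed : N (P *: 'e_ord_max) := N_scale_p Hsub_ed.

Lemma phi_p_e_pred : phi (P *: 'e_(inord d.-1)) = c *: (zeta *m D).
Proof.
apply: scalepI => /=; rewrite -phiZ; last exact: N_p_e_pred.
by rewrite -adx0_ed scalemxAl phi_p_adx0 ?coordZ ?ed_coord0 ?mulr0 // scalerA.
Qed.

(* Only the x_d-coordinate is at stake; it is read off the x_(d-1)-coordinate
   of phi(p x_(d-1)) = c ad(x_0) zeta, which lies in pZ_p. *)
Lemma c_zeta_pZp : exists xi, c *: zeta = P *: xi.
Proof.
have Hzeta := phi_H N_p_ed; apply: pZp_row => k; rewrite coordZ.
have [ltkd|] := ltnP k d; first exact/pZpMl/Hzeta.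
rewrite leq_eqVlt ltnNge -ltnS ltn_ord orbF => /eqP d_k.
have pred_mid : (0 < (inord d.-1 : 'I_d.+1) < d)%N by rewrite inordK //; lia.
have := phi_H N_p_e_pred (proj2 (andP pred_mid)).
rewrite phi_p_e_pred coordZ adx0_coord pred_mid.
have -> : (inord (inord d.-1 : 'I_d.+1).+1 : 'I_d.+1) = k.
  by apply: val_inj; rewrite /= !inordK //; lia.
have lt1d : ((inord 1 : 'I_d.+1) < d)%N by rewrite inord1E.
move/(pZpD (pZpN (pZpMl (c * Lcoef a (inord d.-1 : 'I_d.+1)) (Hzeta _ lt1d)))).
by rewrite mulrDr addrA [c * (_ * _)]mulrCA [_ * (c * _)]mulrC addNr add0r.
Qed.

Lemma phi_p_adx0X j :
  [/\ N (P ^+ j.+1 *: (('e_ord_max : V) *m D ^+ j)),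
      (P ^+ j.+1 *: (('e_ord_max : V) *m D ^+ j)) 0 0 = 0 &
      phi (P ^+ j.+1 *: (('e_ord_max : V) *m D ^+ j)) = (P * c) ^+ j *: (zeta *m D ^+ j)].
Proof.
elim: j => [|j [Nz z0 phi_z]].
  by rewrite expr1 !expr0 !mulmx1 scale1r coordZ ed_coord0 mulr0.
have -> : P ^+ j.+2 *: (('e_ord_max : V) *m D ^+ j.+1) =
          P *: ((P ^+ j.+1 *: (('e_ord_max : V) *m D ^+ j)) *m D).
  by rewrite -scalemxAl scalerA -exprS -mulmxA mulmxE -exprSr.
split; [exact: N_p_adx0 | by rewrite coordZ adx0_coord0 mulr0 |].
by rewrite phi_p_adx0 // phi_z -scalemxAl scalerA -exprS -mulmxA mulmxE -exprSr.
Qed.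

Lemma phi_adx0X_image_e (k : 'I_d.+1) :
  adx0X_image (phi (P ^+ (2 * d) *: ('e_k *m D ^+ d))).
Proof.
have [->|k_neq0] := eqVneq k 0.
  by rewrite (adx0X_e0 (ltnW d_ge2)) scaler0 phi0; exists 0; rewrite mul0mx scaler0.
have k_gt0 : (0 < k)%N by rewrite lt0n.
have [xi c_zeta] := c_zeta_pZp.
set m := (d - k + d)%N.
have e_k : ('e_k : V) = 'e_ord_max *m D ^+ (d - k).
  rewrite adx0X_ed; last lia.
  by congr delta_mx; apply: val_inj; rewrite /= inordK; have := ltn_ord k; lia.
have [Nzm _ phi_zm] := phi_p_adx0X m.
have -> : P ^+ (2 * d) *: (('e_k : V) *m D ^+ d) =
          P ^+ k.-1 *: (P ^+ m.+1 *: (('e_ord_max : V) *m D ^+ m)).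
  rewrite e_k -mulmxA mulmxE -exprD scalerA -exprD -/m.
  by rewrite (_ : (k.-1 + m.+1 = 2 * d)%N) //; have := ltn_ord k; lia.
rewrite phiZ // phi_zm; exists (c ^+ m.-1 *: (xi *m D ^+ (d - k))).
have m_gt0 : (0 < m)%N by rewrite addn_gt0 (ltnW d_ge2) orbT.
have c_m : c ^+ m = c ^+ m.-1 * c by rewrite -exprSr prednK.
rewrite exprMn c_m mulrA -scalerA scalemxAl c_zeta -!scalemxAl -mulmxA mulmxE -exprD.
rewrite !scalerA -/m (_ : (2 * d = k.-1 + m + 1)%N); last by have := ltn_ord k; lia.
by rewrite !exprD expr1; congr (_ *: _); ring.
Qed.

Lemma phi_adx0X_image v : adx0X_image v -> adx0X_image (phi v).
Proof.
move=> [u ->]; have [I_sub _ _] := adx0X_image_ideal.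
have gen_N (k : 'I_d.+1) : N (P ^+ (2 * d) *: ('e_k *m D ^+ d)).
  by apply: adx0X_image_sub_N; exists 'e_k.
rewrite {1}(row_sum_delta u) mulmx_suml scaler_sumr.
under eq_bigr => k _ do rewrite -scalemxAl scalerA mulrC -scalerA.
by rewrite phi_lincomb //; apply: submodule_sum => // k; exact: phi_adx0X_image_e.
Qed.

Lemma not_simple_with_p : ~ simple_ve br Hsub N phi.
Proof.
move=> simple; have inv : phi_invariant Hsub N phi adx0X_image.
  exact: phi_invariant_sub N_H adx0X_image_sub_N phi_adx0X_image.
have := simple _ adx0X_image_ideal inv (P ^+ (2 * d) *: (('e_ord_max : V) *m D ^+ d)).
move=> /(_ (ex_intro _ _ erefl)); rewrite adx0X_ed_d => /rowP/(_ ord_max).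
rewrite coordZ avecE mxE => /eqP.
by rewrite (zp_mulf_eq0 p_prime) (negbTE (pX_neq0 _)) (negbTE a_last).
Qed.

End TranslateByP.

Lemma virtual_endo_not_simple : ~ simple_ve br Hsub N phi.
Proof.
have [[n0 Nn0 n0_coord0]|no_n0] := pselect (exists2 n0, N n0 & n0 0 0 = P).
  have [c phi_n0] := phi_H Nn0 (ltnW d_ge2 : ((0%R : 'I_d.+1) < d)%N).
  exact: not_simple_with_p Nn0 n0_coord0 phi_n0.
exact: not_simple_without_p.
Qed.

End VirtualEndomorphism.

Lemma Hsub_not_self_similar : ~ self_similar_index br Hsub p.
Proof.
move=> [N [phi [[[N_sub NH Nbr] N_index phiH [phiD phiZ phi_br]] simple]]].
exact: virtual_endo_not_simple N_sub NH Nbr N_index phiH phiD phiZ phi_br simple.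
Qed.

End Lattice.

Lemma Lcoef_last (R : comNzRingType) d (a : 'I_d -> R) : (0 < d)%N ->
  (forall i : 'I_d, (i : nat) = d.-1 -> a i != 0) -> Lcoef a d != 0.
Proof.
move=> d_gt0 a_last; rewrite /Lcoef d_gt0; case: insubP => [i _ i_pred|]; first exact: a_last.
by rewrite ltn_predL d_gt0.
Qed.

Theorem corollary1p26 (p : nat) (d : nat) (a : 'I_d -> zp p) :
  prime p -> (2 <= d)%N ->
  (forall i : 'I_d, (i : nat) = d.-1 -> a i != 0) ->
  exists H : 'rV[zp p]_d.+1 -> Prop,
    subalgebra (Lbracket a) (fun _ => True) H /\
    finite_index (fun _ => True) H /\
    ~ self_similar_index (Lbracket a) H p.
Proof.
move=> p_prime d_ge2 a_last.
have a_d : Lcoef a d != 0 by apply: Lcoef_last; rewrite // ltnW.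
exists (@Hsub p d); split; first exact: Hsub_subalgebra.
split; first exact: Hsub_finite_index p_prime d_ge2.
exact: Hsub_not_self_similar p_prime d_ge2 a_d.
Qed.
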